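(* In a state estimation (SE) or parameter-state estimation (PS) problem, fix data $y_k$ and let $P_{k-1},Q_{k-1}\in\bar{\mathcal{P}}_k(\bar{\mathcal{X}})\cap\mathcal{P}_1(\bar{\mathcal{X}})$. Let $P_k^-,Q_k^-$ be the probability measures on $\bar{\mathcal{X}}$ with Lebesgue densities: in SE, $p_k^-(x)=\mathbb{E}_{X\sim P_{k-1}}[T_k(x,X)]$, $q_k^-(x)=\mathbb{E}_{X\sim Q_{k-1}}[T_k(x,X)]$; in PS, $p_k^-(x,w)=\int_{\mathcal{X}}T_k(x,x_{k-1},w)p_{k-1}(x_{k-1},w)dx_{k-1}$, $q_k^-(x,w)=\int_{\mathcal{X}}T_k(x,x_{k-1},w)q_{k-1}(x_{k-1},w)dx_{k-1}$, where $p_{k-1},q_{k-1}$ are the Lebesgue densities of $P_{k-1},Q_{k-1}$. Assume $$\mathbb{E}_{(\bar X,\bar X')\sim P_k^-\otimes Q_k^-}[d_{\bar{\mathcal{X}}}(\bar X,\bar X')h_k(y_k,\bar X)h_k(y_k,\bar X')]\le\Big(\int_{\bar{\mathcal{X}}}h_k(y_k,\bar x)d\bar x\Big)^2\mathbb{E}_{(\bar X,\bar X')\sim P_k^-\otimes Q_k^-}[d_{\bar{\mathcal{X}}}(\bar X,\bar X')],$$ $$\mathbb{E}_{(\bar X,\bar X')\sim P_k^-\otimes Q_k^-}[d_{\bar{\mathcal{X}}}(\bar X,\bar X')]\le\sup_{\bar x_0\in\bar{\mathcal{X}}}\Big|\mathbb{E}_{\bar X\sim P_{k-1}}[d_{\bar{\mathcal{X}}}(\bar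 X,\bar x_0)]-\mathbb{E}_{\bar X\sim Q_{k-1}}[d_{\bar{\mathcal{X}}}(\bar X,\bar x_0)]\Big|,$$ and $$\Big(\int_{\bar{\mathcal{X}}}h_k(y_k,\bar x)d\bar x\Big)^2\le\mathbb{E}_{\bar X\sim P_k^-}[h_k(y_k,\bar X)]\,\mathbb{E}_{\bar X\sim Q_k^-}[h_k(y_k,\bar X)].$$ Then $P_k=F_k(P_{k-1})$ and $Q_k^*=F_k(Q_{k-1})$ satisfy $W_1(P_k,Q_k^* )\le W_1(P_{k-1},Q_{k-1})$.
   Context: $(\mathcal{X},d_{\mathcal{X}})$ (SE) or $(\mathcal{X}\times\mathcal{W},d_{\mathcal{X}\times\mathcal{W}})$ (PS) is a Polish metric space, written $(\bar{\mathcal{X}},d_{\bar{\mathcal{X}}})$; $dx,dw$ denote Lebesgue measure, $\lambda$ Lebesgue measure on $\mathcal{X}\times\mathcal{W}$. SE: Markov model with transition density $T_k(x_k,x_{k-1})$ (density in $x_k$) and observation density $h_k(y_k,x_k)$; $\tilde F_k\mu(dx)=h_k(y_k,x)(\int T_k(x,x')\mu(dx'))dx$. PS: transition density $T_k(x_k,x_{k-1},w)$ and observation density $h_k(y_k,x_k,w)$ (for PS, $h_k(y_k,\bar x)$ means $h_k(y_k,x,w)$ at $\bar x=(x,w)$); for $\mu\ll\lambda$ with density $\pi$, $\tilde F_k\mu(dx,dw)=h_k(y_k,x,w)(\int T_k(x,x',w)\pi(x',w)dx')dxdw$. Evidence $Z_k(\mu)=\tilde F_k\mu(\bar{\mathcal{X}})$,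 posterior $F_k\mu=\tilde F_k\mu/Z_k(\mu)$. Admissible priors $\bar{\mathcal{P}}_k(\bar{\mathcal{X}})$: SE: probability measures with $\int T_k(x_k,x')\mu(dx')<\infty$ for all $x_k$ and $0<Z_k(\mu)<\infty$; PS: $\mu\ll\lambda$, $\int T_k(x_k,x',w)\pi(x',w)dx'<\infty$ for all $x_k,w$, $0<Z_k(\mu)<\infty$. $\mathcal{P}_1$: probability measures with finite first moment; $W_1$: 1-Wasserstein distance; $\otimes$: product measure. *)

From HB Require Import structures.
From mathcomp Require Import all_boot all_order all_algebra.
From mathcomp Require Import all_classical all_reals all_analysis.
Set Implicit Arguments. Unset Strict Implicit. Unset Printing Implicit Defensive.
Import Order.TTheory GRing.Theory Num.Theory.
Local Open Scope classical_set_scope.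
Local Open Scope ring_scope.

Section Generic.
Context {R : realType} {dS : measure_display} {S : measurableType dS}.

Definition is_metric (d : S -> S -> R) : Prop :=
  [/\ (forall x y, 0 <= d x y),
      (forall x y, d x y = 0 <-> x = y),
      (forall x y, d x y = d y x) &
      (forall x y z, d x z <= d x y + d y z)].

Definition coupling (mu nu : set S -> \bar R) (pi : probability (S * S)%type R)
  : Prop :=
  (forall A, measurable A -> pi (A `*` setT) = mu A) /\
  (forall B, measurable B -> pi (setT `*` B) = nu B).

Definition W1 (d : S -> S -> R) (mu nu : set S -> \bar R) : \bar R :=
  ereal_inf [set (\int[pi]_z (d z.1 z.2)%:E)%E | pi in coupling mu nu].

Definition finite_first_moment (d : S -> S -> R) (mu : set S -> \bar R) : Prop :=
  exists x0 : S, (\int[mu]_x (d x x0)%:E < +oo)%E.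

Definition dens_meas (lam : set S -> \bar R) (f : S -> \bar R) : set S -> \bar R :=
  fun A => (\int[lam]_(z in A) f z)%E.

(* unnormalized posterior: (F~ mu)(A) = int_A h(z) pm(z) lam(dz), where pm is
   the prior-predictive density (int T(z,.) dmu in SE) *)
Definition unnorm_post (lam : set S -> \bar R) (hy : S -> R) (pm : S -> \bar R)
  : set S -> \bar R := fun A => (\int[lam]_(z in A) ((hy z)%:E * pm z))%E.

Definition evidence (lam : set S -> \bar R) (hy : S -> R) (pm : S -> \bar R) : \bar R :=
  unnorm_post lam hy pm setT.

Definition posterior (lam : set S -> \bar R) (hy : S -> R) (pm : S -> \bar R)
  : set S -> \bar R :=
  fun A => (unnorm_post lam hy pm A * ((fine (evidence lam hy pm))^-1)%:E)%E.

End Generic.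

Section SE.
Context {R : realType} {dX : measure_display} {X : measurableType dX}.

Definition pred_SE (T : X -> X -> R) (mu : set X -> \bar R) : X -> \bar R :=
  fun x => (\int[mu]_x' (T x x')%:E)%E.

(* admissible priors \bar P_k(X) in SE (mu a probability measure) *)
Definition admissible_SE (lam : set X -> \bar R) (T : X -> X -> R) (hy : X -> R)
  (mu : set X -> \bar R) : Prop :=
  (forall x, (pred_SE T mu x < +oo)%E) /\
  (0 < evidence lam hy (pred_SE T mu) < +oo)%E.
End SE.

Section PS.
Context {R : realType} {dX dW : measure_display}
  {X : measurableType dX} {W : measurableType dW}.

Definition pred_PS (lamX : set X -> \bar R) (T : X -> X -> W -> R)
  (p : X * W -> R) : X * W -> \bar R :=
  fun z => (\int[lamX]_x' (T z.1 x' z.2 * p (x', z.2))%:E)%E.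

Definition is_density (lam : set (X * W) -> \bar R) (mu : set (X * W) -> \bar R)
  (p : X * W -> R) : Prop :=
  (forall z, 0 <= p z) /\ measurable_fun setT p /\
  (forall A, measurable A -> mu A = (\int[lam]_(z in A) (p z)%:E)%E).

Definition admissible_PS (lamX : set X -> \bar R) (lam : set (X * W) -> \bar R)
  (T : X -> X -> W -> R) (hy : X * W -> R) (mu : set (X * W) -> \bar R)
  (p : X * W -> R) : Prop :=
  is_density lam mu p /\
  (forall z, (pred_PS lamX T p z < +oo)%E) /\
  (0 < evidence lam hy (pred_PS lamX T p) < +oo)%E.
End PS.

(* The product of the two posteriors is a coupling of them, so W1 (F P) (F Q) is
   at most its transport cost.  By Fubini this cost is the integral of
   d(x,x') h(x) h(x') against P_k^- (x) Q_k^-, divided by the two evidences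
   Z(P) = E_{P_k^-}[h] and Z(Q) = E_{Q_k^-}[h]; the first and third hypotheses
   bound it by the P_k^- (x) Q_k^- cost of d, and the second one by
   sup_x0 |E_P d(., x0) - E_Q d(., x0)|.  That supremum is at most W1 P Q:
   for any coupling, the triangle inequality bounds the difference of the two
   moments by the cost of the coupling. *)

From HB Require Import structures.
From mathcomp Require Import all_boot all_order all_algebra.
From mathcomp Require Import all_classical all_reals all_analysis.
From mathcomp Require Import measurable_realfun.
Import Order.TTheory GRing.Theory Num.Theory.
Local Open Scope classical_set_scope.
Local Open Scope ring_scope.
Set Implicit Arguments. Unset Strict Implicit. Unset Printing Implicit Defensive.

(* The proof arguments do not enter the body: they carry the side conditions of
   the measure and sigma-finiteness instances declared below. *)
Definition density_measure d (T : measurableType d) (R : realType)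
    (mu : {sigma_finite_measure set T -> \bar R}) (g : T -> \bar R)
    (g0 : forall x, (0 <= g x)%E) (mg : measurable_fun setT g)
    (gfin : forall x, g x \is a fin_num) : set T -> \bar R :=
  dens_meas mu g.

Section density_measure.
Local Open Scope ereal_scope.
Context d (T : measurableType d) (R : realType).
Variables (mu : {sigma_finite_measure set T -> \bar R}) (g : T -> \bar R).
Hypotheses (g0 : forall x, 0 <= g x) (mg : measurable_fun setT g)
  (gfin : forall x, g x \is a fin_num).

Local Notation nu := (density_measure mu g0 mg gfin).

Let nu0 : nu set0 = 0.
Proof. exact: integral_set0. Qed.

Let nu_ge0 A : 0 <= nu A.
Proof. exact: integral_ge0. Qed.

Let nu_sigma_additive : semi_sigma_additive nu.
Proof. exact: semi_sigma_additive_nng_induced. Qed.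

HB.instance Definition _ :=
  isMeasure.Build _ _ _ nu nu0 nu_ge0 nu_sigma_additive.

(* nu is finite on the sets F n `&` {g <= n}, where F exhausts mu. *)
Let nu_sigma_finite : sigma_finite setT nu.
Proof.
have /sigma_finiteP[F [TF ndF Foo]] := sigma_finiteT mu.
pose G n := F n `&` [set x | g x <= n%:R%:E].
exists G.
  apply/seteqP; split => // x _.
  have [k _ Fkx] : (\bigcup_i F i) x by rewrite -TF.
  have [m gxm] : exists m : nat, g x <= m%:R%:E.
    exists (Num.Def.archi_bound (fine (g x))).
    rewrite -(fineK (gfin x)) lee_fin ltW//.
    exact: archi_boundP (fine_ge0 (g0 x)).
  exists (maxn k m) => //; split.
    by move/subsetPset: (ndF _ _ (leq_maxl k m)); apply.
  by rewrite /= (le_trans gxm)// lee_fin ler_nat leq_maxr.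
move=> n; have [mFn Fnoo] := Foo n.
have mGn : measurable (G n).
  by apply: measurableI => //; rewrite -[X in measurable X]setTI;
    exact: emeasurable_fun_infty_c.
split => //; apply: (@le_lt_trans _ _ (\int[mu]_(x in G n) n%:R%:E)).
  by apply: ge0_le_integral => //; [exact: measurable_funTS|move=> x []].
rewrite integral_cst// lte_mul_pinfty// (le_lt_trans _ Fnoo)//.
by apply: le_measure; rewrite ?inE// => x [].
Qed.

HB.instance Definition _ :=
  Measure_isSigmaFinite.Build _ _ _ nu nu_sigma_finite.

Import HBNNSimple.

Let integral_density_nnsfun (h : {nnsfun T >-> R}) :
  \int[nu]_x (h x)%:E = \int[mu]_x ((h x)%:E * g x).
Proof.
have h0 r x : 0 <= (r * \1_(h @^-1` [set r]) x)%:E.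
  by rewrite EFinM nnfun_muleindic_ge0.
have mh r : measurable_fun setT (fun x => (r * \1_(h @^-1` [set r]) x)%:E).
  exact/measurable_EFinP/measurableT_comp.
under eq_integral do rewrite fimfunE -fsumEFin//.
under [RHS]eq_integral => x _.
  by rewrite fimfunE -fsumEFin// ge0_mule_fsuml; [over|move=> r; exact: h0].
rewrite !ge0_integral_fsum//; last 2 first.
  - by move=> r; exact: emeasurable_funM.
  - by move=> r x _; rewrite mule_ge0.
apply: eq_fsbigr => r /[!inE] -[t _ <-].
rewrite integralZl_indic_nnsfun//.
under [RHS]eq_integral do rewrite EFinM -muleA.
rewrite ge0_integralZl//; last 3 first.
  - by apply: emeasurable_funM => //; exact/measurable_EFinP.
  - by move=> x _; rewrite mule_ge0.
  - by rewrite lee_fin.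
congr (_ * _); rewrite integral_indic// setIT.
transitivity (\int[mu]_(x in h @^-1` [set h t]) g x) => //.
rewrite [LHS]integral_mkcond.
by apply: eq_integral => x _; rewrite epatch_indic muleC.
Qed.

Lemma integral_density (f : T -> \bar R) : (forall x, 0 <= f x) ->
  measurable_fun setT f -> \int[nu]_x f x = \int[mu]_x (f x * g x).
Proof.
move=> f0 mf; pose h := nnsfun_approx measurableT mf.
have hf x : (EFin \o h n) x @[n --> \oo] --> f x by exact: cvg_nnsfun_approx.
have mh n : measurable_fun setT (EFin \o h n) by exact/measurable_EFinP.
have h_nd x : {homo (fun n => (h n x)%:E) : a b / (a <= b)%N >-> a <= b}.
  by move=> a b ab; rewrite lee_fin; exact/lefP/nd_nnsfun_approx.
transitivity (limn (fun n => \int[nu]_x (h n x)%:E)).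
  rewrite -monotone_convergence//; last by move=> n x _; rewrite lee_fin.
  by apply: eq_integral => x _; apply/esym/cvg_lim => //; exact: hf.
transitivity (limn (fun n => \int[mu]_x ((h n x)%:E * g x))).
  by congr (limn _); apply/funext => n; exact: integral_density_nnsfun.
rewrite -monotone_convergence//.
- apply: eq_integral => x _; apply/cvg_lim => //.
  by apply: cvgeZr; [exact: gfin|exact: hf].
- by move=> n; exact: emeasurable_funM (mh n) mg.
- by move=> n x _; rewrite mule_ge0 ?lee_fin.
- by move=> x _ a b ab; rewrite lee_wpmul2r// h_nd.
Qed.

End density_measure.

Section ge0_integral_mnormalize.
Local Open Scope ereal_scope.
Context d (T : measurableType d) (R : realType).
Variables (mu : {measure set T -> \bar R}) (P : probability T R).
Hypothesis mu_setT : 0 < mu setT < +oo.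

Lemma ge0_integral_mnormalize (f : T -> \bar R) :
  (forall x, 0 <= f x) -> measurable_fun setT f ->
  \int[mnormalize mu P]_x f x = ((fine (mu setT))^-1)%:E * \int[mu]_x f x.
Proof.
move=> f0 mf; case/andP: mu_setT => mu0 muoo.
have c0 : (0 <= (fine (mu setT))^-1)%R by rewrite invr_ge0 fine_ge0// ltW.
rewrite -(@ge0_integral_mscale _ _ _ mu setT measurableT (NngNum c0))//.
apply: eq_measure_integral => A mA _.
change (mnormalize mu P A = mscale (NngNum c0) mu A).
by rewrite /mnormalize gt_eqF// lt_eqF//= /mscale muleC.
Qed.

End ge0_integral_mnormalize.

Section posterior.
Local Open Scope ereal_scope.
Context d (S : measurableType d) (R : realType).
Variables (lam : {sigma_finite_measure set S -> \bar R}) (hy : S -> R)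
  (pm : S -> \bar R).
Hypotheses (mhy : measurable_fun setT hy) (hy0 : forall x, (0 <= hy x)%R)
  (pm0 : forall x, 0 <= pm x) (mpm : measurable_fun setT pm)
  (pmfin : forall x, pm x \is a fin_num)
  (evidence_gt0 : 0 < evidence lam hy pm)
  (evidence_lty : evidence lam hy pm < +oo).

Let hpm x := (hy x)%:E * pm x.

Let hpm0 x : 0 <= hpm x.
Proof. by rewrite mule_ge0 ?lee_fin. Qed.

Let mhpm : measurable_fun setT hpm.
Proof. by apply: emeasurable_funM => //; exact/measurable_EFinP. Qed.

Let hpmfin x : hpm x \is a fin_num.
Proof. by rewrite fin_numM. Qed.

Let posterior_mnormalize (P0 : probability S R) :
  posterior lam hy pm = mnormalize (density_measure lam hpm0 mhpm hpmfin) P0.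
Proof. by apply/funext => A; rewrite /mnormalize /= gt_eqF// lt_eqF. Qed.

(* [mnormalize] needs a fallback probability; a Dirac mass will do. *)
Let nonempty_S : [set: S] !=set0.
Proof.
apply/set0P/negP => /eqP S0; move: evidence_gt0.
by rewrite /evidence /unnorm_post S0 integral_set0 ltxx.
Qed.

Lemma posterior_probability :
  exists P : probability S R, P = posterior lam hy pm :> (set S -> \bar R).
Proof.
have [x0 _] := nonempty_S.
by exists (mnormalize (density_measure lam hpm0 mhpm hpmfin) \d_x0);
  rewrite (posterior_mnormalize \d_x0).
Qed.

Lemma integral_posterior (f : S -> \bar R) :
  (forall x, 0 <= f x) -> measurable_fun setT f ->
  \int[posterior lam hy pm]_x f x = ((fine (evidence lam hy pm))^-1)%:E *
    \int[density_measure lam pm0 mpm pmfin]_x ((hy x)%:E * f x).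
Proof.
move=> f0 mf; have [x0 _] := nonempty_S.
rewrite (posterior_mnormalize \d_x0) ge0_integral_mnormalize ?evidence_gt0//.
rewrite !integral_density//; last 2 first.
  - by move=> x; rewrite mule_ge0 ?lee_fin.
  - by apply: emeasurable_funM => //; exact/measurable_EFinP.
by congr (_ * _); apply: eq_integral => x _; rewrite /hpm muleA [f x * _]muleC.
Qed.

Lemma evidence_density :
  evidence lam hy pm = \int[density_measure lam pm0 mpm pmfin]_x (hy x)%:E.
Proof. by rewrite integral_density//; exact/measurable_EFinP. Qed.

End posterior.

Section coupling_marginals.
Local Open Scope ereal_scope.
Context d (S : measurableType d) (R : realType).
Variables (mu nu : {measure set S -> \bar R}) (pi : probability (S * S)%type R).
Hypothesis pi_coupling : coupling mu nu pi.

Lemma coupling_integral_fst (f : S -> \bar R) : (forall x, 0 <= f x) ->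
  measurable_fun setT f -> \int[pi]_z f z.1 = \int[mu]_x f x.
Proof.
move=> f0 mf; have mfst := @measurable_fst _ _ S S.
transitivity (\int[pushforward pi fst]_x f x).
  by rewrite ge0_integral_pushforward// preimage_setT.
by apply: eq_measure_integral => A mA _; rewrite -pi_coupling.1// setXT.
Qed.

Lemma coupling_integral_snd (f : S -> \bar R) : (forall x, 0 <= f x) ->
  measurable_fun setT f -> \int[pi]_z f z.2 = \int[nu]_x f x.
Proof.
move=> f0 mf; have msnd := @measurable_snd _ _ S S.
transitivity (\int[pushforward pi snd]_x f x).
  by rewrite ge0_integral_pushforward// preimage_setT.
by apply: eq_measure_integral => A mA _; rewrite -pi_coupling.2// setTX.
Qed.

End coupling_marginals.

Section W1_bounds.
Local Open Scope ereal_scope.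
Context d (S : measurableType d) (R : realType) (dist : S -> S -> R).

Lemma W1_le_product (P Q : probability S R) :
  W1 dist P Q <= \int[P \x Q]_z (dist z.1 z.2)%:E.
Proof.
apply: ereal_inf_lbound; exists (P \x Q) => //; split => A mA.
  transitivity (P A * Q setT); first exact: product_measure1E.
  by rewrite probability_setT mule1.
transitivity (P setT * Q A); first exact: product_measure1E.
by rewrite probability_setT mul1e.
Qed.

Hypotheses (dist_metric : is_metric dist)
  (mdist : measurable_fun setT (fun z : S * S => dist z.1 z.2)).

Let dist_ge0 x y : 0 <= (dist x y)%:E.
Proof. by have [d0 _ _ _] := dist_metric; rewrite lee_fin. Qed.
Local Hint Resolve dist_ge0 : core.

Let mdist_l x0 : measurable_fun setT (fun x => (dist x x0)%:E).
Proof.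
exact/measurable_EFinP/(measurableT_comp mdist (pair2_measurable x0)).
Qed.

Lemma first_moment_lty (P : probability S R) : finite_first_moment dist P ->
  forall x0, \int[P]_x (dist x x0)%:E < +oo.
Proof.
case=> x1 P_x1 x0; have [_ _ _ dist_triangle] := dist_metric.
apply: (@le_lt_trans _ _ (\int[P]_x ((dist x x1)%:E + (dist x1 x0)%:E))).
  apply: ge0_le_integral => //; first exact: emeasurable_funD.
  by move=> x _; rewrite -EFinD lee_fin.
rewrite ge0_integralD// integral_cst// lte_add_pinfty//.
rewrite lte_mul_pinfty -?lee_fin//.
exact: le_lt_trans (probability_le1 P measurableT) (ltry 1).
Qed.

Lemma abse_moment_diff_le (P Q : probability S R)
    (pi : probability (S * S)%type R) (x0 : S) :
  coupling P Q pi -> finite_first_moment dist P -> finite_first_moment dist Q ->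
  `| \int[P]_x (dist x x0)%:E - \int[Q]_x (dist x x0)%:E |
    <= \int[pi]_z (dist z.1 z.2)%:E.
Proof.
move=> pi_coupling fP fQ; have [_ _ dist_sym dist_triangle] := dist_metric.
have moment_fin (M : probability S R) : finite_first_moment dist M ->
    \int[M]_x (dist x x0)%:E \is a fin_num.
  by move=> fM; rewrite ge0_fin_numE ?first_moment_lty ?integral_ge0.
have [a_fin b_fin] := (moment_fin P fP, moment_fin Q fQ).
rewrite -(coupling_integral_fst pi_coupling _ (mdist_l x0))// in a_fin *.
rewrite -(coupling_integral_snd pi_coupling _ (mdist_l x0))// in b_fin *.
set a := \int[pi]_z _ in a_fin *; set b := \int[pi]_z _ in b_fin *.
set D := \int[pi]_z _.
have mfst := measurableT_comp (mdist_l x0) (@measurable_fst _ _ S S).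
have msnd := measurableT_comp (mdist_l x0) (@measurable_snd _ _ S S).
have mD : measurable_fun setT (fun z : S * S => (dist z.1 z.2)%:E).
  exact/measurable_EFinP.
have a_le : a <= D + b.
  rewrite -ge0_integralD//; apply: ge0_le_integral => //.
    exact: emeasurable_funD.
  by move=> z _; rewrite -EFinD lee_fin.
have b_le : b <= D + a.
  rewrite -ge0_integralD//; apply: ge0_le_integral => //.
    exact: emeasurable_funD.
  by move=> z _; rewrite -EFinD lee_fin [dist z.1 _]dist_sym.
have [ab0|ab0] := leP 0 (a - b).
  by rewrite gee0_abs// leeBlDr.
by rewrite (lee0_abs (ltW ab0)) oppeB ?fin_num_adde_defr// addeC leeBlDr.
Qed.

Lemma moment_gap_le_W1 (P Q : probability S R) :
  finite_first_moment dist P -> finite_first_moment dist Q ->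
  ereal_sup [set `| \int[P]_x (dist x x0)%:E - \int[Q]_x (dist x x0)%:E |
            | x0 in [set: S]] <= W1 dist P Q.
Proof.
move=> fP fQ; apply/ereal_supP => _ [x0 _ <-].
by apply/ereal_infP => _ [pi pi_coupling <-]; exact: abse_moment_diff_le.
Qed.

End W1_bounds.

Lemma lee_invM_le (R : realType) (z1 z2 : R) (A B C : \bar R) :
  (0 < z1)%R -> (0 < z2)%R -> (0 <= B)%E -> (0 <= C)%E ->
  (A <= C * B)%E -> (C <= (z1 * z2)%:E)%E ->
  ((z1^-1)%:E * ((z2^-1)%:E * A) <= B)%E.
Proof.
move=> z1_gt0 z2_gt0 B0 C0 ACB Cz.
have C_fin : C \is a fin_num by rewrite ge0_fin_numE// (le_lt_trans Cz) ?ltry.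
rewrite -(fineK C_fin) in ACB Cz; rewrite lee_fin in Cz.
apply: (@le_trans _ _ ((z1^-1 * z2^-1 * fine C)%:E * B)%E).
  rewrite !EFinM -!muleA.
  by do 2 (apply: lee_wpmul2l; first by rewrite lee_fin invr_ge0 ltW).
rewrite -[leRHS]mul1e lee_wpmul2r// lee_fin -invfM mulrC.
by rewrite ler_pdivrMr ?mulr_gt0// mul1r.
Qed.

Section posterior_contraction.
Local Open Scope ereal_scope.
Context d (S : measurableType d) (R : realType).
Variables (lam : {sigma_finite_measure set S -> \bar R}) (hy : S -> R)
  (pm qm : S -> \bar R).
Hypotheses (mhy : measurable_fun setT hy) (hy0 : forall x, (0 <= hy x)%R)
  (pm0 : forall x, 0 <= pm x) (mpm : measurable_fun setT pm)
  (pmfin : forall x, pm x \is a fin_num)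
  (qm0 : forall x, 0 <= qm x) (mqm : measurable_fun setT qm)
  (qmfin : forall x, qm x \is a fin_num)
  (evp_gt0 : 0 < evidence lam hy pm) (evp_lty : evidence lam hy pm < +oo)
  (evq_gt0 : 0 < evidence lam hy qm) (evq_lty : evidence lam hy qm < +oo).

Local Notation Pdens := (density_measure lam pm0 mpm pmfin).
Local Notation Qdens := (density_measure lam qm0 mqm qmfin).

Lemma integral_posterior_product (F : S * S -> \bar R) :
  (forall z, 0 <= F z) -> measurable_fun setT F ->
  \int[posterior lam hy pm \x posterior lam hy qm]_z F z =
  ((fine (evidence lam hy pm))^-1)%:E * (((fine (evidence lam hy qm))^-1)%:E *
    \int[Pdens \x Qdens]_z ((hy z.1)%:E * (hy z.2)%:E * F z)).
Proof.
move=> F0 mF; set cp := (fine _)^-1%R; set cq := (fine _)^-1%R.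
have cq0 : (0 <= cq)%R by rewrite invr_ge0 fine_ge0// ltW.
have hy0E x : 0 <= (hy x)%:E by rewrite lee_fin.
have mhyE : measurable_fun setT (fun x => (hy x)%:E) by exact/measurable_EFinP.
have [Pp Pp_post] := posterior_probability mhy hy0 pm0 mpm pmfin evp_gt0 evp_lty.
have [Qp Qp_post] := posterior_probability mhy hy0 qm0 mqm qmfin evq_gt0 evq_lty.
pose G x := \int[Qdens]_y ((hy y)%:E * F (x, y)).
have G0 x : 0 <= G x by apply: integral_ge0 => y _; rewrite mule_ge0.
have mG : measurable_fun setT G.
  apply: (@measurable_fun_fubini_tonelli_F _ _ _ _ _ Qdens
    (fun z => (hy z.2)%:E * F z)); last by move=> z; rewrite mule_ge0.
  by apply: emeasurable_funM => //; exact: measurableT_comp mhyE measurable_snd.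
rewrite -Pp_post -Qp_post fubini_tonelli1//.
transitivity (\int[Pp]_x (cq%:E * G x)).
  apply: eq_integral => x _.
  change (\int[(Qp : set S -> \bar R)]_y F (x, y) = cq%:E * G x).
  rewrite Qp_post integral_posterior//.
  exact: measurableT_comp mF (pair1_measurable x).
rewrite Pp_post integral_posterior//; last 2 first.
  - by move=> x; rewrite mule_ge0 ?lee_fin.
  - exact: measurable_funeM.
pose H z := (hy z.1)%:E * (hy z.2)%:E * F z.
have H0 z : 0 <= H z by rewrite !mule_ge0.
have mH : measurable_fun setT H.
  apply: emeasurable_funM => //; apply: emeasurable_funM.
    exact: measurableT_comp mhyE measurable_fst.
  exact: measurableT_comp mhyE measurable_snd.
congr (_ * _); rewrite (fubini_tonelli1 _ mH H0).
rewrite -ge0_integralZl//; last 2 first.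
  - exact: (@measurable_fun_fubini_tonelli_F _ _ _ _ _ Qdens _ mH H0).
  - by move=> x _; apply: integral_ge0.
apply: eq_integral => x _; rewrite muleCA; congr (_ * _).
rewrite /fubini_F -ge0_integralZl//; last 2 first.
  - apply: emeasurable_funM => //.
    exact: measurableT_comp mF (pair1_measurable x).
  - by move=> y _; rewrite mule_ge0.
by apply: eq_integral => y _; rewrite muleA.
Qed.

Variables (dist : S -> S -> R) (P Q : probability S R).
Hypotheses (dist_metric : is_metric dist)
  (mdist : measurable_fun setT (fun z : S * S => dist z.1 z.2)).

Local Notation Ppred := (dens_meas lam pm).
Local Notation Qpred := (dens_meas lam qm).

Lemma W1_posterior_le :
  finite_first_moment dist P -> finite_first_moment dist Q ->
  \int[Ppred \x Qpred]_z (dist z.1 z.2 * hy z.1 * hy z.2)%:E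
    <= (\int[lam]_x (hy x)%:E) ^+ 2 * \int[Ppred \x Qpred]_z (dist z.1 z.2)%:E ->
  \int[Ppred \x Qpred]_z (dist z.1 z.2)%:E
    <= ereal_sup [set `| \int[P]_x (dist x x0)%:E - \int[Q]_x (dist x x0)%:E |
                 | x0 in [set: S]] ->
  (\int[lam]_x (hy x)%:E) ^+ 2
    <= \int[Ppred]_x (hy x)%:E * \int[Qpred]_x (hy x)%:E ->
  W1 dist (posterior lam hy pm) (posterior lam hy qm) <= W1 dist P Q.
Proof.
move=> fP fQ.
rewrite -[Ppred]/Pdens -[Qpred]/Qdens.
move=> weighted_cost_le cost_le_gap norm_le.
have [Pp Pp_post] := posterior_probability mhy hy0 pm0 mpm pmfin evp_gt0 evp_lty.
have [Qp Qp_post] := posterior_probability mhy hy0 qm0 mqm qmfin evq_gt0 evq_lty.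
have dist0 z : 0 <= (dist z.1 z.2)%:E.
  by have [d0 _ _ _] := dist_metric; rewrite lee_fin.
apply: le_trans (moment_gap_le_W1 dist_metric mdist fP fQ).
apply: le_trans cost_le_gap.
rewrite -Pp_post -Qp_post; apply: le_trans (W1_le_product _ _ _) _.
rewrite Pp_post Qp_post integral_posterior_product//; last exact/measurable_EFinP.
under eq_integral do rewrite -!EFinM mulrC mulrA.
apply: lee_invM_le weighted_cost_le _; rewrite ?fine_gt0 ?evp_gt0 ?evq_gt0//.
- exact: integral_ge0.
- exact: sqre_ge0.
rewrite EFinM !fineK ?ge0_fin_numE ?(ltW evp_gt0) ?(ltW evq_gt0)//.
by rewrite (evidence_density lam mhy hy0 pm0 mpm pmfin)
  (evidence_density lam mhy hy0 qm0 mqm qmfin).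
Qed.

End posterior_contraction.

(* A named copy of [m1 \x m2]: for [\x] itself the library's sigma-finiteness
   instance is shadowed by the one for products of subprobabilities. *)
Definition sf_product_measure d1 d2 (T1 : measurableType d1)
    (T2 : measurableType d2) (R : realType)
    (m1 : {sigma_finite_measure set T1 -> \bar R})
    (m2 : {sigma_finite_measure set T2 -> \bar R}) : set (T1 * T2) -> \bar R :=
  (m1 \x m2)%E.

Section sf_product_measure.
Local Open Scope ereal_scope.
Context d1 d2 (T1 : measurableType d1) (T2 : measurableType d2) (R : realType).
Variables (m1 : {sigma_finite_measure set T1 -> \bar R})
  (m2 : {sigma_finite_measure set T2 -> \bar R}).

HB.instance Definition _ := Measure.copy (sf_product_measure m1 m2) (m1 \x m2).

Let sf_product_measure_sigma_finite :
  sigma_finite setT (sf_product_measure m1 m2).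
Proof.
have /sigma_finiteP[F [TF ndF Foo]] := sigma_finiteT m1.
have /sigma_finiteP[G [TG ndG Goo]] := sigma_finiteT m2.
exists (fun n => F n `*` G n).
  rewrite -setXTT TF TG; apply/seteqP; split => [[x y] [/= [n _ Fnx] [k _ Gky]]|].
    exists (maxn n k) => //; split.
    - by move/subsetPset: (ndF _ _ (leq_maxl n k)); apply.
    - by move/subsetPset: (ndG _ _ (leq_maxr n k)); apply.
  by move=> [x y] [n _ [/= Fnx Gny]]; split; exists n.
move=> n; have [mFn Fnoo] := Foo n; have [mGn Gnoo] := Goo n.
split; first exact: measurableX.
by rewrite /sf_product_measure product_measure1E// lte_mul_pinfty// ge0_fin_numE.
Qed.

HB.instance Definition _ := Measure_isSigmaFinite.Build _ _ _
  (sf_product_measure m1 m2) sf_product_measure_sigma_finite.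

End sf_product_measure.

Section predictive_densities.
Local Open Scope ereal_scope.
Context (R : realType) (dX dW : measure_display)
  (X : measurableType dX) (W : measurableType dW).

Lemma pred_SE_ge0 (T : X -> X -> R) (mu : {measure set X -> \bar R}) :
  (forall x x', (0 <= T x x')%R) -> forall x, 0 <= pred_SE T mu x.
Proof. by move=> T0 x; apply: integral_ge0 => x' _; rewrite lee_fin. Qed.

Lemma pred_SE_fin_num (T : X -> X -> R) (mu : {measure set X -> \bar R}) :
  (forall x x', (0 <= T x x')%R) -> (forall x, pred_SE T mu x < +oo) ->
  forall x, pred_SE T mu x \is a fin_num.
Proof. by move=> T0 T_lty x; rewrite ge0_fin_numE ?pred_SE_ge0. Qed.

Lemma measurable_pred_SE (T : X -> X -> R)
    (mu : {sigma_finite_measure set X -> \bar R}) :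
  measurable_fun setT (fun z : X * X => T z.1 z.2) ->
  (forall x x', (0 <= T x x')%R) -> measurable_fun setT (pred_SE T mu).
Proof.
move=> mT T0; apply: (@measurable_fun_fubini_tonelli_F _ _ _ _ _ mu
  (fun z => (T z.1 z.2)%:E)); last by move=> z; rewrite lee_fin.
exact/measurable_EFinP.
Qed.

Lemma pred_PS_ge0 (lamX : {measure set X -> \bar R}) (T : X -> X -> W -> R)
    (p : X * W -> R) :
  (forall x x' w, (0 <= T x x' w)%R) -> (forall z, (0 <= p z)%R) ->
  forall z, 0 <= pred_PS lamX T p z.
Proof.
by move=> T0 p0 z; apply: integral_ge0 => x' _; rewrite lee_fin mulr_ge0.
Qed.

Lemma pred_PS_fin_num (lamX : {measure set X -> \bar R})
    (T : X -> X -> W -> R) (p : X * W -> R) :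
  (forall x x' w, (0 <= T x x' w)%R) -> (forall z, (0 <= p z)%R) ->
  (forall z, pred_PS lamX T p z < +oo) ->
  forall z, pred_PS lamX T p z \is a fin_num.
Proof. by move=> T0 p0 p_lty z; rewrite ge0_fin_numE ?pred_PS_ge0. Qed.

Lemma measurable_pred_PS (lamX : {sigma_finite_measure set X -> \bar R})
    (T : X -> X -> W -> R) (p : X * W -> R) :
  measurable_fun setT (fun z : (X * X) * W => T z.1.1 z.1.2 z.2) ->
  (forall x x' w, (0 <= T x x' w)%R) ->
  measurable_fun setT p -> (forall z, (0 <= p z)%R) ->
  measurable_fun setT (pred_PS lamX T p).
Proof.
move=> mT T0 mp p0; apply: (@measurable_fun_fubini_tonelli_F _ _ _ _ _ lamX
  (fun u : (X * W) * X => (T u.1.1 u.2 u.1.2 * p (u.2, u.1.2))%:E));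
  last by move=> u; rewrite lee_fin mulr_ge0.
have m11 : measurable_fun setT (fun u : (X * W) * X => u.1.1).
  exact: measurableT_comp measurable_fst measurable_fst.
have m12 : measurable_fun setT (fun u : (X * W) * X => u.1.2).
  exact: measurableT_comp measurable_snd measurable_fst.
have mTargs : measurable_fun setT
    (fun u : (X * W) * X => ((u.1.1, u.2), u.1.2)).
  by do 2 apply: measurable_fun_pair => //.
have mpargs : measurable_fun setT (fun u : (X * W) * X => (u.2, u.1.2)).
  exact: measurable_fun_pair.
apply/measurable_EFinP/measurable_funM.
  exact: measurableT_comp mT mTargs.
exact: measurableT_comp mp mpargs.
Qed.

End predictive_densities.

Theorem theorem6 :
  (* ===== SE: state estimation ===== *)
  (forall (R : realType) (dX dY : measure_display)
     (X : measurableType dX) (Y : measurableType dY)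
     (lam : {sigma_finite_measure set X -> \bar R})   (* "Lebesgue" dx *)
     (muY : {measure set Y -> \bar R})                (* reference measure dy *)
     (d : X -> X -> R) (T : X -> X -> R) (h : Y -> X -> R) (y : Y)
     (P Q : probability X R),
   is_metric d ->
   measurable_fun setT (fun z : X * X => d z.1 z.2) ->
   (* T = T_k is a transition density: T(., x') is a density in x_k *)
   measurable_fun setT (fun z : X * X => T z.1 z.2) ->
   (forall x x', 0 <= T x x') ->
   (forall x', (\int[lam]_x (T x x')%:E = 1)%E) ->
   (* h = h_k is an observation density (density in y) *)
   measurable_fun setT (fun z : Y * X => h z.1 z.2) ->
   (forall y' x, 0 <= h y' x) ->
   (forall x, (\int[muY]_y' (h y' x)%:E = 1)%E) ->
   (* P_{k-1}, Q_{k-1} in \bar P_k(X) \cap P_1(X) *)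
   admissible_SE lam T (h y) P -> admissible_SE lam T (h y) Q ->
   finite_first_moment d P -> finite_first_moment d Q ->
   let pm := pred_SE T P in
   let qm := pred_SE T Q in
   let Pm := dens_meas lam pm in     (* P_k^- *)
   let Qm := dens_meas lam qm in     (* Q_k^- *)
   (\int[Pm \x Qm]_z (d z.1 z.2 * h y z.1 * h y z.2)%:E
      <= (\int[lam]_x (h y x)%:E) ^+ 2 * \int[Pm \x Qm]_z (d z.1 z.2)%:E)%E ->
   (\int[Pm \x Qm]_z (d z.1 z.2)%:E
      <= ereal_sup [set `| \int[P]_x (d x x0)%:E - \int[Q]_x (d x x0)%:E |
                   | x0 in [set: X]])%E ->
   ((\int[lam]_x (h y x)%:E) ^+ 2
      <= \int[Pm]_x (h y x)%:E * \int[Qm]_x (h y x)%:E)%E ->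
   (W1 d (posterior lam (h y) pm) (posterior lam (h y) qm) <= W1 d P Q)%E)
  /\
  (* ===== PS: parameter-state estimation ===== *)
  (forall (R : realType) (dX dW dY : measure_display)
     (X : measurableType dX) (W : measurableType dW) (Y : measurableType dY)
     (lamX : {sigma_finite_measure set X -> \bar R})  (* "Lebesgue" dx *)
     (lamW : {sigma_finite_measure set W -> \bar R})  (* "Lebesgue" dw *)
     (muY : {measure set Y -> \bar R})
     (d : X * W -> X * W -> R) (T : X -> X -> W -> R) (h : Y -> X -> W -> R)
     (y : Y) (P Q : probability (X * W)%type R) (p q : X * W -> R),
   let lam := (lamX \x lamW)%E in                     (* lambda on X x W *)
   is_metric d ->
   measurable_fun setT (fun z : (X * W) * (X * W) => d z.1 z.2) ->
   (* T = T_k is a transition density (in x_k, for each x_{k-1}, w) *)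
   measurable_fun setT (fun z : (X * X) * W => T z.1.1 z.1.2 z.2) ->
   (forall x x' w, 0 <= T x x' w) ->
   (forall x' w, (\int[lamX]_x (T x x' w)%:E = 1)%E) ->
   (* h = h_k is an observation density (density in y) *)
   measurable_fun setT (fun z : Y * (X * W) => h z.1 z.2.1 z.2.2) ->
   (forall y' x w, 0 <= h y' x w) ->
   (forall x w, (\int[muY]_y' (h y' x w)%:E = 1)%E) ->
   let hy := fun z : X * W => h y z.1 z.2 in
   (* P_{k-1}, Q_{k-1} in \bar P_k(X x W) \cap P_1(X x W), densities p, q *)
   admissible_PS lamX lam T hy P p -> admissible_PS lamX lam T hy Q q ->
   finite_first_moment d P -> finite_first_moment d Q ->
   let pm := pred_PS lamX T p in
   let qm := pred_PS lamX T q in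
   let Pm := dens_meas lam pm in     (* P_k^- *)
   let Qm := dens_meas lam qm in     (* Q_k^- *)
   (\int[Pm \x Qm]_z (d z.1 z.2 * hy z.1 * hy z.2)%:E
      <= (\int[lam]_z (hy z)%:E) ^+ 2 * \int[Pm \x Qm]_z (d z.1 z.2)%:E)%E ->
   (\int[Pm \x Qm]_z (d z.1 z.2)%:E
      <= ereal_sup [set `| \int[P]_z (d z z0)%:E - \int[Q]_z (d z z0)%:E |
                   | z0 in [set: X * W]])%E ->
   ((\int[lam]_z (hy z)%:E) ^+ 2
      <= \int[Pm]_z (hy z)%:E * \int[Qm]_z (hy z)%:E)%E ->
   (W1 d (posterior lam hy pm) (posterior lam hy qm) <= W1 d P Q)%E).
Proof.
split.
- move=> R dX dY X Y lam muY d T h y P Q d_metric md mT T0 _ mh h0 _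
    [Pfin /andP[evP_gt0 evP_lty]] [Qfin /andP[evQ_gt0 evQ_lty]] fP fQ.
  have mhy : measurable_fun setT (h y).
    exact: measurableT_comp mh (pair1_measurable y).
  exact: (W1_posterior_le mhy (h0 y)
    (pred_SE_ge0 P T0) (measurable_pred_SE P mT T0) (pred_SE_fin_num T0 Pfin)
    (pred_SE_ge0 Q T0) (measurable_pred_SE Q mT T0) (pred_SE_fin_num T0 Qfin)
    evP_gt0 evP_lty evQ_gt0 evQ_lty d_metric md fP fQ).
- move=> R dX dW dY X W Y lamX lamW muY d T h y P Q p q lam d_metric md mT T0 _
    mh h0 _ hy [[p0 [mp _]] [pfin /andP[evP_gt0 evP_lty]]]
    [[q0 [mq _]] [qfin /andP[evQ_gt0 evQ_lty]]] fP fQ.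
  have mhy : measurable_fun setT hy.
    exact: measurableT_comp mh (pair1_measurable y).
  exact: (W1_posterior_le (lam := sf_product_measure lamX lamW)
    mhy (fun z => h0 y z.1 z.2)
    (pred_PS_ge0 lamX T0 p0) (measurable_pred_PS lamX mT T0 mp p0)
    (pred_PS_fin_num T0 p0 pfin)
    (pred_PS_ge0 lamX T0 q0) (measurable_pred_PS lamX mT T0 mq q0)
    (pred_PS_fin_num T0 q0 qfin)
    evP_gt0 evP_lty evQ_gt0 evQ_lty d_metric md fP fQ).
Qed.
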